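(* Let $d\geq 1$. The moduli orders $r_{PP}$, $r_{PN}$, $r_{NP}$, $r_{NN}$ of length $d$ are rigid. More precisely, let $Q$ be a hyperbolic polynomial of degree $d$ with positive leading coefficient, all coefficients nonzero and roots of pairwise distinct moduli. - If $Q$ defines $r_{PN}$ (when $d$ is even) or $r_{NN}$ (when $d$ is odd), then $Q$ defines the sign pattern $\Sigma_+$ of length $d+1$. - If $Q$ defines $r_{NP}$ (when $d$ is even) or $r_{PP}$ (when $d$ is odd), then $Q$ defines the sign pattern $\Sigma_-$ of length $d+1$.
   Context: A hyperbolic polynomial (HP) is a real univariate polynomial all of whose roots are real. The sign pattern (SP) defined by a polynomial $a_dx^d+\dots+a_0$ with $a_d>0$ and all $a_j\neq0$ is $(\mathrm{sgn}(a_d),\mathrm{sgn}(a_{d-1}),\dots,\mathrm{sgn}(a_0))$. A moduli order (MO) of length $d$ is a string of $d$ letters $P$/$N$ separated by $<$. A HP defines the MO obtained by listing the moduli of its roots in increasing order, writing $P$ for a positive root and $N$ for a negative root. A MO is rigid if all HPs (with positive leading coefficient, nonzero coefficients, roots of distinct moduli) defining it define the same SP. The alternating MOs are: $r_{PN}: P<N<P<N<\dots<N$; $r_{PP}: P<N<\dots<P$; $r_{NP}: N<P<\dots<P$; $r_{NN}: N<P<\dots<N$. In each, letters alternate, and the first and last letters are given by the subscripts. The sign pattern $\Sigma_+$ of length $d+1$ is $(+,+,-,-,+,+,-,-,\dots)$. Its entry in position $k$ (for $k=0,\dots,d$, i.e. the sign of the coefficient of $x^{d-k}$) is $+$ if $k\equiv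 0,1 \pmod 4$ and $-$ if $k\equiv 2,3\pmod 4$. The sign pattern $\Sigma_-$ of length $d+1$ is $(+,-,-,+,+,-,-,+,\dots)$. Its entry in position $k$ is $+$ if $k\equiv 0,3\pmod 4$ and $-$ if $k\equiv 1,2\pmod 4$. *)

From mathcomp Require Import all_boot all_order all_algebra.
Set Implicit Arguments. Unset Strict Implicit. Unset Printing Implicit Defensive.
Import Order.TTheory GRing.Theory Num.Theory.
Local Open Scope ring_scope.

Section Defs.
Variable R : realFieldType.

(* Hyperbolic polynomial: all roots real, i.e. Q splits into linear
   factors over R. *)
Definition hyperbolic (Q : {poly R}) : Prop :=
  exists s : seq R, Q = lead_coef Q *: \prod_(x <- s) ('X - x%:P).

Definition distinct_moduli (Q : {poly R}) : Prop :=
  exists s : seq R, Q = lead_coef Q *: \prod_(x <- s) ('X - x%:P)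
                    /\ uniq [seq `|x| | x <- s].

(* A moduli order is encoded as a seq bool: true = P (positive root),
   false = N (negative root), listed by increasing modulus. *)
Definition defines_MO (Q : {poly R}) (mo : seq bool) : Prop :=
  exists s : seq R, Q = lead_coef Q *: \prod_(x <- s) ('X - x%:P)
    /\ sorted (fun x y => `|x| < `|y|) s
    /\ [seq (0 < x) | x <- s] = mo.

(* A sign pattern is encoded as a seq bool: true = +, false = -,
   listed from the leading coefficient a_d down to a_0. *)
Definition defines_SP (Q : {poly R}) (sp : seq bool) : Prop :=
  [seq (0 < a) | a <- rev (polyseq Q)] = sp.
End Defs.

Definition alt_startP (d : nat) : seq bool := mkseq (fun i => ~~ odd i) d.
Definition alt_startN (d : nat) : seq bool := mkseq (fun i => odd i) d.
(* r_PN (d even) and r_PP (d odd) start with P; r_NP (d even) and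
   r_NN (d odd) start with N. *)
Definition r_PN (d : nat) := alt_startP d.
Definition r_PP (d : nat) := alt_startP d.
Definition r_NP (d : nat) := alt_startN d.
Definition r_NN (d : nat) := alt_startN d.

Definition Sigma_plus (d : nat) : seq bool :=
  mkseq (fun k => (k %% 4 == 0)%N || (k %% 4 == 1)%N) d.+1.
Definition Sigma_minus (d : nat) : seq bool :=
  mkseq (fun k => (k %% 4 == 0)%N || (k %% 4 == 3)%N) d.+1.

From mathcomp Require Import all_boot all_order all_algebra.
From mathcomp Require Import zify lra.
Import Order.TTheory GRing.Theory Num.Theory.
Local Open Scope ring_scope.
Set Implicit Arguments. Unset Strict Implicit. Unset Printing Implicit Defensive.

(* Write Q = c * \prod_(x <- s) (X - x), the roots s listed by increasing
   modulus.  Reversing s and negating its entries gives t with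
   Q = c * \prod_(u <- t) (X + u), t listed by DECREASING modulus, so that
   by Vieta the coefficient of X^(d-k) is c * e_k(t), e_k the k-th
   elementary symmetric function.  For the four alternating moduli orders
   the entries of t alternate in sign, and then every e_k(t) has the sign
   of its dominant monomial t_0 ... t_(k-1), which we call alt_sign b k
   (b the sign of t_0).  This is proved by induction on t through
   e_k(y :: t) = e_k(t) + y e_(k-1)(t): for even k both summands have the
   same sign, for odd k they have opposite signs and the second dominates
   thanks to the auxiliary bound |e_k(t)| <= |t_0| |e_(k-1)(t)| (k odd),
   carried along the induction.  Finally Sigma_+ and Sigma_- are the sign
   sequences alt_sign true and alt_sign false, and a parity computation
   identifies the sign of the root of largest modulus in each case. *)

Section ElementarySymmetric.
Variable R : comNzRingType.
Implicit Types (y : R) (t : seq R).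

Fixpoint esym t (k : nat) : R :=
  match t, k with
  | _, 0%N => 1
  | [::], _.+1 => 0
  | y :: t', k'.+1 => esym t' k + y * esym t' k'
  end.

Lemma esym0 t : esym t 0 = 1.
Proof. by case: t. Qed.

Lemma esym_cons y t k : esym (y :: t) k.+1 = esym t k.+1 + y * esym t k.
Proof. by []. Qed.

Lemma esym_oversize t k : (size t < k)%N -> esym t k = 0.
Proof.
elim: t k => [|y t IH] [|k] //= lt_t_k.
by rewrite !IH ?mulr0 ?addr0 // ltnW.
Qed.

Lemma size_prod_XaddC t : size (\prod_(u <- t) ('X + u%:P)) = (size t).+1.
Proof.
have -> : \prod_(u <- t) ('X + u%:P) = \prod_(u <- t) ('X - (- u)%:P).
  by under [RHS]eq_bigr do rewrite polyCN opprK.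
exact: size_prod_XsubC.
Qed.

Lemma coef_prod_XaddC t k : (k <= size t)%N ->
  (\prod_(u <- t) ('X + u%:P))`_(size t - k) = esym t k.
Proof.
elim: t k => [|y t IH] k le_k_t; first by case: k le_k_t => // _; rewrite big_nil coef1.
rewrite big_cons mulrDl coefD coefXM coefCM.
case: k le_k_t => [|k] le_k_t /=.
  rewrite [_`_(size t).+1]nth_default ?size_prod_XaddC // mulr0 addr0.
  by rewrite -[size t]subn0 IH // esym0.
rewrite subSS; case: (ltnP k (size t)) => [lt_k_t|ge_k_t].
  have -> : (size t - k == 0)%N = false by rewrite subn_eq0 leqNgt lt_k_t.
  by rewrite -subnS !IH // ltnW.
have -> : k = size t by apply/eqP; rewrite eqn_leq ge_k_t andbT.
by rewrite subnn eqxx add0r esym_oversize // add0r -(subnn (size t)) IH.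
Qed.

End ElementarySymmetric.

(* The sign (true = positive) of a product of k nonzero reals of
   alternating signs, the first one of sign b. *)
Fixpoint alt_sign (b : bool) (k : nat) : bool :=
  if k is k'.+1 then b == alt_sign (~~ b) k' else true.

Lemma alt_signN b k : alt_sign (~~ b) k = odd k (+) alt_sign b k.
Proof.
elim: k b => [|k IH] b //=.
by rewrite negbK IH; case: b; case: (odd k); case: (alt_sign _ k).
Qed.

Lemma alt_signE b k : alt_sign b k =
  if b then (k %% 4 == 0)%N || (k %% 4 == 1)%N else (k %% 4 == 0)%N || (k %% 4 == 3)%N.
Proof.
have -> : alt_sign b k = alt_sign b (k %% 4).
  rewrite {1}(divn_eq k 4); elim: (k %/ 4)%N => [|q IH]; first by rewrite mul0n add0n.
  by rewrite mulSn -addnA /= !negbK IH; case: (b); case: (alt_sign _ _).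
by case: (k %% 4)%N (ltn_pmod k (isT : (0 < 4)%N)) => [|[|[|[|r]]]] //; case: b.
Qed.

Lemma Sigma_plusE d : Sigma_plus d = mkseq (alt_sign true) d.+1.
Proof. by apply: eq_mkseq => k; rewrite alt_signE. Qed.

Lemma Sigma_minusE d : Sigma_minus d = mkseq (alt_sign false) d.+1.
Proof. by apply: eq_mkseq => k; rewrite alt_signE. Qed.

Section Signs.
Variable R : realDomainType.
Implicit Types (s b : bool) (x y u v : R) (t : seq R).

Definition has_sign s x := if s then 0 < x else x < 0.
Definition has_wsign s x := if s then 0 <= x else x <= 0.

Lemma has_sign_gt0 s x : has_sign s x -> (0 < x) = s.
Proof. by case: s => //= x_lt0; apply/negbTE; rewrite -leNgt ltW. Qed.

Lemma has_sign_neq0 s x : has_sign s x -> x != 0.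
Proof. by case: s => /= [/gt_eqF|/lt_eqF] ->. Qed.

Lemma has_signW s x : has_sign s x -> has_wsign s x.
Proof. by case: s => /= /ltW. Qed.

Lemma has_wsign0 s : has_wsign s 0.
Proof. by case: s => /=. Qed.

Lemma has_sign_opp x : x != 0 -> has_sign (~~ (0 < x)) (- x).
Proof. by case: (ltrgtP x 0) => [x_lt0|x_gt0|->] //=; rewrite ?oppr_gt0 ?oppr_lt0. Qed.

Lemma has_sign_mul s1 s2 x y :
  has_sign s1 x -> has_sign s2 y -> has_sign (s1 == s2) (x * y).
Proof.
case: s1; case: s2 => /= sx sy.
- exact: mulr_gt0.
- by rewrite pmulr_rlt0.
- by rewrite nmulr_rlt0.
- by rewrite nmulr_rgt0.
Qed.

Lemma has_sign_add s u v : has_wsign s u -> has_sign s v -> has_sign s (u + v).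
Proof. by case: s => /=; lra. Qed.

Lemma norm_le_add s u v : has_wsign s u -> has_wsign s v -> `|u| <= `|u + v|.
Proof.
case: s => /= su sv; first by rewrite !ger0_norm ?addr_ge0 //; lra.
by rewrite !ler0_norm ?addr_le0 //; lra.
Qed.

Lemma has_sign_add_dominated s u v :
  has_wsign (~~ s) u -> has_sign s v -> `|u| < `|v| ->
  has_sign s (u + v) /\ `|u + v| <= `|v|.
Proof.
case: s => /= su sv.
  by rewrite (ler0_norm su) (gtr0_norm sv) ler_norml => ?; split; lra.
by rewrite (ger0_norm su) (ltr0_norm sv) ler_norml => ?; split; lra.
Qed.

Definition alternates b t := forall i, (i < size t)%N -> has_sign (b (+) odd i) t`_i.

Lemma alternates_cons b y t :
  alternates b (y :: t) -> has_sign b y /\ alternates (~~ b) t.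
Proof.
move=> alt_yt; split; first by have := alt_yt 0%N isT; rewrite addbF.
by move=> i lt_i_t; have := alt_yt i.+1 lt_i_t; rewrite /= addbN -addNb.
Qed.

Definition esym_control b t k :=
  has_sign (alt_sign b k) (esym t k) /\
  (odd k -> `|esym t k| <= `|t`_0| * `|esym t k.-1|).

Lemma esym_control0 b t : esym_control b t 0.
Proof. by split=> //; rewrite esym0 /= ltr01. Qed.

Section ConsStep.
Variables (b : bool) (y : R) (t : seq R).
Hypothesis sign_y : has_sign b y.
Hypothesis ctrl_t : forall k, (k <= size t)%N -> esym_control (~~ b) t k.

Lemma norm_esym_le_cons k : ~~ odd k -> (k <= size t)%N ->
  `|esym t k| <= `|esym (y :: t) k|.
Proof.
case: k => [|k] even_k le_k; first by rewrite !esym0.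
have [sign_ek1 _] := ctrl_t le_k.
rewrite alt_signN (negbTE even_k) /= in sign_ek1.
have sign_yek := has_sign_mul sign_y (ctrl_t (ltnW le_k)).1.
exact: norm_le_add (has_signW sign_ek1) (has_signW sign_yek).
Qed.

Lemma esym_control_cons : ((0 < size t)%N -> `|t`_0| < `|y|) ->
  forall k, (k <= (size t).+1)%N -> esym_control b (y :: t) k.
Proof.
move=> lt_t0_y [|k] le_k; first exact: esym_control0.
have [sign_ek _] := ctrl_t le_k.
have sign_yek : has_sign (alt_sign b k.+1) (y * esym t k) := has_sign_mul sign_y sign_ek.
have wsign_ek1 : has_wsign (odd k.+1 (+) alt_sign b k.+1) (esym t k.+1).
  rewrite -alt_signN; case: (ltnP k (size t)) => [lt_k_t|ge_k_t].
    exact/has_signW/(ctrl_t lt_k_t).1.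
  by rewrite esym_oversize ?has_wsign0.
rewrite /esym_control esym_cons.
case odd_k1: (odd k.+1) wsign_ek1 => /= wsign_ek1; last by split=> //; apply: has_sign_add.
have lt_ek1 : `|esym t k.+1| < `|y * esym t k|.
  rewrite normrM; case: (ltnP k (size t)) => [lt_k_t|ge_k_t].
    apply: le_lt_trans ((ctrl_t lt_k_t).2 odd_k1) _.
    rewrite ltr_pM2r ?normr_gt0 ?(has_sign_neq0 sign_ek) // lt_t0_y //.
    exact: leq_ltn_trans lt_k_t.
  rewrite esym_oversize // normr0.
  by rewrite mulr_gt0 ?normr_gt0 ?(has_sign_neq0 sign_y) ?(has_sign_neq0 sign_ek).
have [sign_sum le_sum] := has_sign_add_dominated wsign_ek1 sign_yek lt_ek1.
split=> // _; apply: le_trans le_sum _; rewrite normrM ler_wpM2l //=.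
by apply: norm_esym_le_cons; rewrite // -odd_k1 /= negbK.
Qed.

End ConsStep.

Lemma esym_sign b t : sorted (fun x y => `|y| < `|x|) t -> alternates b t ->
  forall k, (k <= size t)%N -> has_sign (alt_sign b k) (esym t k).
Proof.
suff ctrl : sorted (fun x y => `|y| < `|x|) t -> alternates b t ->
    forall k, (k <= size t)%N -> esym_control b t k.
  by move=> sorted_t alt_t k le_k; have [] := ctrl sorted_t alt_t k le_k.
elim: t b => [|y t IH] b sorted_yt alt_yt k le_k.
  by case: k le_k => // _; apply: esym_control0.
have [sign_y alt_t] := alternates_cons alt_yt.
apply: esym_control_cons sign_y (IH _ (path_sorted sorted_yt) alt_t) _ _ le_k.
by case: t {IH alt_yt alt_t} sorted_yt => //= z t /andP[].
Qed.

End Signs.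

Section Polynomials.
Variable R : realFieldType.

Lemma sign_pattern_prod b (c : R) (t : seq R) : 0 < c ->
  sorted (fun x y => `|y| < `|x|) t -> alternates b t ->
  defines_SP (c *: \prod_(u <- t) ('X + u%:P)) (mkseq (alt_sign b) (size t).+1).
Proof.
move=> c_gt0 sorted_t alt_t.
have sQ : size (c *: \prod_(u <- t) ('X + u%:P)) = (size t).+1.
  by rewrite size_scale ?gt_eqF // size_prod_XaddC.
apply: (@eq_from_nth _ false); first by rewrite size_map size_rev sQ size_mkseq.
move=> i; rewrite size_map size_rev sQ => lt_i.
rewrite (nth_map 0) ?size_rev ?sQ // nth_rev ?sQ // nth_mkseq // subSS.
rewrite coefZ coef_prod_XaddC // pmulr_rgt0 //.
exact: has_sign_gt0 (esym_sign sorted_t alt_t _).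
Qed.

(* An alternating moduli order, read from the largest modulus down and
   with the roots negated, gives roots of decreasing moduli and
   alternating signs. *)
Lemma alternating_roots (Q : {poly R}) c d :
  size Q = d.+1 -> Q`_0 != 0 -> defines_MO Q (mkseq (fun i => c (+) odd i) d) ->
  exists t : seq R, [/\ Q = lead_coef Q *: \prod_(u <- t) ('X + u%:P), size t = d,
     sorted (fun x y => `|y| < `|x|) t & alternates (~~ c (+) odd d.-1) t].
Proof.
move=> sQ Q0 [s [Qs [sorted_s signs_s]]].
have lc_neq0 : lead_coef Q != 0 by rewrite lead_coef_eq0 -size_poly_gt0 sQ.
have size_s : size s = d.
  have := congr1 (fun p : {poly R} => size p) Qs.
  by rewrite /= size_scale // size_prod_XsubC sQ => -[].
have s_neq0 x : x \in s -> x != 0.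
  move=> xs; apply: contraNneq Q0 => x0; rewrite -horner_coef0 Qs hornerZ.
  by move: xs; rewrite x0 -root_prod_XsubC => /eqP->; rewrite mulr0.
exists (map -%R (rev s)); split.
- rewrite {1}Qs big_map big_rev; congr (_ *: _).
  by under [RHS]eq_bigr do rewrite polyCN.
- by rewrite size_map size_rev.
- rewrite sorted_map rev_sorted; apply: sub_sorted sorted_s => x y /=.
  by rewrite !normrN.
move=> i; rewrite size_map size_rev size_s => lt_i.
rewrite (nth_map 0) ?size_rev ?size_s // nth_rev ?size_s //.
have lt_j : (d - i.+1 < d)%N by lia.
have sign_j : (0 < s`_(d - i.+1)) = c (+) odd (d - i.+1).
  have := congr1 (nth false ^~ (d - i.+1)%N) signs_s.
  by rewrite (nth_map 0) ?size_s // nth_mkseq.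
have -> : ~~ c (+) odd d.-1 (+) odd i = ~~ (0 < s`_(d - i.+1)).
  rewrite sign_j (_ : (d - i.+1 = d.-1 - i)%N); last by lia.
  rewrite oddB; last by lia.
  by case: (c); case: (odd d.-1); case: (odd i).
by apply/has_sign_opp/s_neq0/mem_nth; rewrite size_s.
Qed.

(* The sign pattern defined by an alternating moduli order of length d
   whose root of largest modulus is positive iff c (+) odd (d - 1). *)
Lemma sign_pattern_alternating_MO (Q : {poly R}) c d :
  size Q = d.+1 -> 0 < lead_coef Q -> Q`_0 != 0 ->
  defines_MO Q (mkseq (fun i => c (+) odd i) d) ->
  defines_SP Q (mkseq (alt_sign (~~ c (+) odd d.-1)) d.+1).
Proof.
move=> sQ lc_gt0 Q0 /(alternating_roots sQ Q0) [t [Qt <- sorted_t alt_t]].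
by rewrite [Q in defines_SP Q]Qt; apply: sign_pattern_prod.
Qed.

End Polynomials.

Theorem theorem1p6 (R : realFieldType) (d : nat) (Q : {poly R}) :
  (1 <= d)%N ->
  size Q = d.+1 ->
  0 < lead_coef Q ->
  (forall i : nat, (i <= d)%N -> Q`_i != 0) ->
  hyperbolic Q ->
  distinct_moduli Q ->
  ((if odd d then defines_MO Q (r_NN d) else defines_MO Q (r_PN d)) ->
     defines_SP Q (Sigma_plus d)) /\
  ((if odd d then defines_MO Q (r_PP d) else defines_MO Q (r_NP d)) ->
     defines_SP Q (Sigma_minus d)).
Proof.
move=> d_gt0 sQ lc_gt0 Q_neq0 _ _.
have sign_pattern c := @sign_pattern_alternating_MO R Q c d sQ lc_gt0 (Q_neq0 0%N (leq0n d)).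
have odd_pred : odd d.-1 = ~~ odd d.
  by case: d d_gt0 {sQ Q_neq0 sign_pattern} => //= n _; rewrite negbK.
rewrite Sigma_plusE Sigma_minusE /r_NN /r_PN /r_PP /r_NP /alt_startP /alt_startN.
case: (odd d) odd_pred => odd_pred.
  by split=> [/(sign_pattern false)|/(sign_pattern true)]; rewrite odd_pred.
by split=> [/(sign_pattern true)|/(sign_pattern false)]; rewrite odd_pred.
Qed.
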